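(* Let $G$ be a group with identity $e$, let $*$ be a quandle operation on the set $G$, and let $f\colon G\times G\to G$ be a map. Let $X$ be a non-empty set with a family of binary operations $*_g\colon X\times X\to X$, $g\in G$, forming a $(G,f)$-family of quandles, i.e. satisfying: (1) $x*_g x=x$ for all $x\in X$, $g\in G$; (2) $x*_{gh}y=(x*_g y)*_h y$ and $x*_e y=x$ for all $x,y\in X$, $g,h\in G$ (here $gh$ is the product in $G$); (3) for all $x,y,z\in X$ and $g,h,q\in G$, $$(x*_{f(g,h)}y)*_{f(g*h,q)}z=(x*_{f(g,q)}z)*_{f(g*q,\,h*q)}(y*_{f(h,q)}z).$$ Then for all $x,y\in X$ and all $g,h,q\in G$, $$x*_{f(g,h)f(g*h,q)}\,y=x*_{f(g,q)f(g*q,\,h*q)}\,y,$$ where the subscripts are products in the group $G$.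
   Context: A quandle operation on a set $S$ is a binary operation $*$ with $x*x=x$, unique right division (for all $x,y$ there is a unique $z$ with $x=z*y$), and $(x*y)*z=(x*z)*(y*z)$. *)

Definition is_group {G : Type} (mul : G -> G -> G) (inv : G -> G) (e : G) : Prop :=
  (forall a b c, mul (mul a b) c = mul a (mul b c)) /\
  (forall a, mul e a = a) /\ (forall a, mul a e = a) /\
  (forall a, mul (inv a) a = e) /\ (forall a, mul a (inv a) = e).

Definition is_quandle {S : Type} (op : S -> S -> S) : Prop :=
  (forall x, op x x = x) /\
  (forall x y, exists! z, x = op z y) /\
  (forall x y z, op (op x y) z = op (op x z) (op y z)).

Definition is_Gf_family {G X : Type} (mul : G -> G -> G) (e : G)
    (star : G -> G -> G) (f : G -> G -> G) (qop : G -> X -> X -> X) : Prop :=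
  (forall (x : X) g, qop g x x = x) /\
  (forall (x y : X) g h, qop (mul g h) x y = qop h (qop g x y) y) /\
  (forall (x y : X), qop e x y = x) /\
  (forall (x y z : X) g h q,
     qop (f (star g h) q) (qop (f g h) x y) z =
     qop (f (star g q) (star h q)) (qop (f g q) x z) (qop (f h q) y z)).


Section GfFamily.

Context {G X : Type} {mul star f : G -> G -> G} {qop : G -> X -> X -> X}.

Hypothesis qop_idem : forall (x : X) g, qop g x x = x.
Hypothesis qop_mul : forall (x y : X) g h, qop (mul g h) x y = qop h (qop g x y) y.
Hypothesis qop_twisted_distr : forall (x y z : X) g h q,
  qop (f (star g h) q) (qop (f g h) x y) z =
  qop (f (star g q) (star h q)) (qop (f g q) x z) (qop (f h q) y z).

Lemma qop_twisted_distr_diag (x y : X) (g h q : G) :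
  qop (f (star g h) q) (qop (f g h) x y) y =
  qop (f (star g q) (star h q)) (qop (f g q) x y) y.
Proof. now rewrite qop_twisted_distr, (qop_idem y). Qed.

Lemma qop_mul_twisted_comm (x y : X) (g h q : G) :
  qop (mul (f g h) (f (star g h) q)) x y =
  qop (mul (f g q) (f (star g q) (star h q))) x y.
Proof. rewrite !qop_mul; apply qop_twisted_distr_diag. Qed.

End GfFamily.

Theorem lemma3p10 (G : Type) (mul : G -> G -> G) (inv : G -> G) (e : G)
    (star : G -> G -> G) (f : G -> G -> G)
    (X : Type) (qop : G -> X -> X -> X) :
  is_group mul inv e ->
  is_quandle star ->
  inhabited X ->
  is_Gf_family mul e star f qop ->
  forall (x y : X) (g h q : G),
    qop (mul (f g h) (f (star g h) q)) x y =
    qop (mul (f g q) (f (star g q) (star h q))) x y.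
Proof.
  intros _ _ _ [qop_idem [qop_mul [_ qop_twisted_distr]]].
  exact (qop_mul_twisted_comm qop_idem qop_mul qop_twisted_distr).
Qed.
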